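(* Let $L>0$, $M\ge1$, $\Delta x=\Delta y=L/M$, and Cartesian cells with centers $(x_j,y_k)=(j\Delta x,k\Delta y)$, $j,k\in\{-M,\dots,M\}$. Let $H\in C^1([0,\infty))$, $V:\mathbb{R}^2\to\mathbb{R}$, and $(W_{p,q})_{p,q=-2M}^{2M}$ real numbers with $W_{-p,-q}=W_{p,q}$. Let $t\mapsto(\overline\rho_{j,k}(t))$ be a differentiable solution on $(0,\infty)$, with $\overline\rho_{j,k}(t)\ge0$, of \[ \frac{d\overline\rho_{j,k}}{dt}=-\frac{F^x_{j+\frac12,k}-F^x_{j-\frac12,k}}{\Delta x}-\frac{F^y_{j,k+\frac12}-F^y_{j,k-\frac12}}{\Delta y},\qquad j,k\in\{-M,\dots,M\}, \] where at each time: slopes are chosen so that the point values $\rho^{\rm E}_{j,k}=\overline\rho_{j,k}+\frac{\Delta x}{2}(\rho_x)_{j,k}$, $\rho^{\rm W}_{j,k}=\overline\rho_{j,k}-\frac{\Delta x}{2}(\rho_x)_{j,k}$, $\rho^{\rm N}_{j,k}=\overline\rho_{j,k}+\frac{\Delta y}{2}(\rho_y)_{j,k}$, $\rho^{\rm S}_{j,k}=\overline\rho_{j,k}-\frac{\Delta y}{2}(\rho_y)_{j,k}$ are nonnegative; $\xi_{j,k}=\Delta x\Delta y\sum_{i,l}W_{j-i,k-l}\overline\rho_{i,l}+H'(\overline\rho_{j,k})+V(x_j,y_k)$; $u_{j+\frac12,k}=-\frac{\xi_{j+1,k}-\xi_{j,k}}{\Delta x}$, $v_{j,k+\frac12}=-\frac{\xi_{j,k+1}-\xi_{j,k}}{\Delta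 y}$ with $u^\pm,v^\pm$ their positive/negative parts ($\max(\cdot,0)$, $\min(\cdot,0)$); $F^x_{j+\frac12,k}=u^+_{j+\frac12,k}\rho^{\rm E}_{j,k}+u^-_{j+\frac12,k}\rho^{\rm W}_{j+1,k}$, $F^y_{j,k+\frac12}=v^+_{j,k+\frac12}\rho^{\rm N}_{j,k}+v^-_{j,k+\frac12}\rho^{\rm S}_{j,k+1}$ at interior interfaces; and the discrete no-flux conditions $F^x_{M+\frac12,k}=F^x_{-M-\frac12,k}=F^y_{j,M+\frac12}=F^y_{j,-M-\frac12}=0$ hold. Define \[ E_\Delta(t)=\Delta x\Delta y\sum_{j,k}\Big[\tfrac12\Delta x\Delta y\sum_{i,l}W_{j-i,k-l}\overline\rho_{i,l}\overline\rho_{j,k}+H(\overline\rho_{j,k})+V(x_j,y_k)\overline\rho_{j,k}\Big], \] \[ I_\Delta(t)=\Delta x\Delta y\sum_{j=-M}^{M-1}\sum_{k=-M}^{M-1}\Big[(u_{j+\frac12,k})^2+(v_{j,k+\frac12})^2\Big]\min\big(\rho^{\rm E}_{j,k},\rho^{\rm W}_{j+1,k},\rho^{\rm N}_{j,k},\rho^{\rm S}_{j,k+1}\big). \] Then $\frac{d}{dt}E_\Delta(t)\le-I_\Delta(t)$ for all $t>0$.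
   Context: This is the two-dimensional semi-discrete finite-volume scheme with no-flux boundary conditions on $[-L,L]^2$ for $\rho_t=\nabla\cdot[\rho\nabla(H'(\rho)+V(\mathbf{x})+W*\rho)]$ with symmetric interaction potential $W$ (so $W_{p,q}\approx W(p\Delta x,q\Delta y)$ is symmetric) and $\rho_0\ge0$; $E_\Delta$ is the discrete free energy. *)

From Stdlib Require Import Reals ZArith Lia.
From Coquelicot Require Import Coquelicot.
Open Scope R_scope.

Definition sumZ (a b : Z) (f : Z -> R) : R :=
  sum_f_R0 (fun n => f (a + Z.of_nat n)%Z) (Z.to_nat (b - a)).

Definition inrange (M : nat) (j : Z) : Prop :=
  (- Z.of_nat M <= j <= Z.of_nat M)%Z.

Definition dxM (L : R) (M : nat) : R := L / INR M.

Definition sum2 (M : nat) (f : Z -> Z -> R) : R :=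
  sumZ (- Z.of_nat M) (Z.of_nat M) (fun i => sumZ (- Z.of_nat M) (Z.of_nat M) (fun l => f i l)).

Section Scheme.
(* All quantities at a fixed time; rho = cell averages, rx, ry = slopes. *)
Variables (L : R) (M : nat) (dH : R -> R) (V : R -> R -> R) (W : Z -> Z -> R).
Variables (rho rx ry : Z -> Z -> R).

Let dx := dxM L M.

Definition conv (j k : Z) : R :=
  dx * dx * sum2 M (fun i l => W (j - i)%Z (k - l)%Z * rho i l).

Definition xi (j k : Z) : R :=
  conv j k + dH (rho j k) + V (IZR j * dx) (IZR k * dx).

(* u j k = u_{j+1/2,k},  v j k = v_{j,k+1/2} *)
Definition uvel (j k : Z) : R := - (xi (j + 1) k - xi j k) / dx.
Definition vvel (j k : Z) : R := - (xi j (k + 1) - xi j k) / dx.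

Definition rhoE (j k : Z) : R := rho j k + dx / 2 * rx j k.
Definition rhoW (j k : Z) : R := rho j k - dx / 2 * rx j k.
Definition rhoN (j k : Z) : R := rho j k + dx / 2 * ry j k.
Definition rhoS (j k : Z) : R := rho j k - dx / 2 * ry j k.

Definition posp (a : R) : R := Rmax a 0.
Definition negp (a : R) : R := Rmin a 0.

(* Fx j k = F^x_{j+1/2,k}: upwind flux at interior interfaces
   (-M <= j <= M-1), zero (no-flux) at the boundary interfaces. *)
Definition Fx (j k : Z) : R :=
  if andb (- Z.of_nat M <=? j)%Z (j <? Z.of_nat M)%Z
  then posp (uvel j k) * rhoE j k + negp (uvel j k) * rhoW (j + 1) k
  else 0.

(* Fy j k = F^y_{j,k+1/2} *)
Definition Fy (j k : Z) : R :=
  if andb (- Z.of_nat M <=? k)%Z (k <? Z.of_nat M)%Z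
  then posp (vvel j k) * rhoN j k + negp (vvel j k) * rhoS j (k + 1)
  else 0.

Definition rhs (j k : Z) : R :=
  - (Fx j k - Fx (j - 1) k) / dx - (Fy j k - Fy j (k - 1)) / dx.

Definition dissip : R :=
  dx * dx *
  sumZ (- Z.of_nat M) (Z.of_nat M - 1) (fun j =>
  sumZ (- Z.of_nat M) (Z.of_nat M - 1) (fun k =>
    (uvel j k ^ 2 + vvel j k ^ 2) *
    Rmin (Rmin (rhoE j k) (rhoW (j + 1) k)) (Rmin (rhoN j k) (rhoS j (k + 1))))).
End Scheme.

Definition energy (L : R) (M : nat) (H : R -> R) (V : R -> R -> R)
  (W : Z -> Z -> R) (rho : Z -> Z -> R) : R :=
  dxM L M * dxM L M *
  sum2 M (fun j k =>
    / 2 * (dxM L M * dxM L M * sum2 M (fun i l => W (j - i)%Z (k - l)%Z * rho i l)) * rho j k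
    + H (rho j k) + V (IZR j * dxM L M) (IZR k * dxM L M) * rho j k).

(* H in C^1([0,oo)) with derivative dH: one-sided at 0, dH continuous on [0,oo). *)
Definition C1_halfline (H dH : R -> R) : Prop :=
  (forall x, 0 <= x ->
     filterlim (fun y => (H y - H x) / (y - x))
       (within (fun y => 0 <= y /\ y <> x) (locally x)) (locally (dH x)))
  /\ (forall x, 0 <= x ->
     filterlim dH (within (fun y => 0 <= y) (locally x)) (locally (dH x))).

From Stdlib Require Import Reals ZArith Lia Lra.
From Coquelicot Require Import Coquelicot.
Open Scope R_scope.

(* Differentiating E_Delta and using the symmetry of W gives
   dE_Delta/dt = dx^2 sum_{j,k} xi_{j,k} d(rho_{j,k})/dt.  Summation by parts, where the
   no-flux conditions kill the boundary terms, turns this into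
   - dx^2 sum over interfaces of (u F^x + v F^y).  The upwind flux transports the upstream
   point value, which is nonnegative, so u F^x >= u^2 min(rho^E, rho^W) and likewise for v;
   the minimum of all four point values in I_Delta is smaller still, and the interfaces
   missing from I_Delta contribute nonnegative terms. *)

Lemma sumZ_ext a b f g : (a <= b)%Z -> (forall x, (a <= x <= b)%Z -> f x = g x) ->
  sumZ a b f = sumZ a b g.
Proof. intros Hab Hfg; apply sum_eq; intros n Hn; apply Hfg; lia. Qed.

Lemma sumZ_plus a b f g : sumZ a b (fun x => f x + g x) = sumZ a b f + sumZ a b g.
Proof. apply sum_plus. Qed.

Lemma sumZ_scal a b f c : c * sumZ a b f = sumZ a b (fun x => c * f x).
Proof. unfold sumZ; rewrite scal_sum; apply sum_eq; intros; ring. Qed.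

Lemma sumZ_opp a b f : - sumZ a b f = sumZ a b (fun x => - f x).
Proof.
  replace (- sumZ a b f) with (-1 * sumZ a b f) by ring.
  rewrite sumZ_scal; unfold sumZ; apply sum_eq; intros; ring.
Qed.

Lemma sumZ_le a b f g : (a <= b)%Z -> (forall x, (a <= x <= b)%Z -> f x <= g x) ->
  sumZ a b f <= sumZ a b g.
Proof. intros Hab Hfg; apply sum_Rle; intros n Hn; apply Hfg; lia. Qed.

Lemma sumZ_swap a b c d (f : Z -> Z -> R) :
  sumZ a b (fun i => sumZ c d (fun j => f i j)) =
  sumZ c d (fun j => sumZ a b (fun i => f i j)).
Proof.
  unfold sumZ; induction (Z.to_nat (b - a)) as [|n IH]; [reflexivity|].
  rewrite tech5, IH, <- sum_plus; apply sum_eq; intros; now rewrite tech5.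
Qed.

Lemma sumZ_last a b f : (a <= b - 1)%Z -> sumZ a b f = sumZ a (b - 1) f + f b.
Proof.
  intros Hab; unfold sumZ.
  replace (Z.to_nat (b - a)) with (S (Z.to_nat (b - 1 - a))) by lia.
  rewrite tech5; do 2 f_equal; lia.
Qed.

Lemma sumZ_single a f : sumZ a a f = f a.
Proof. unfold sumZ; rewrite Z.sub_diag; simpl; now rewrite Z.add_0_r. Qed.

Lemma sumZ_nonneg a b f : (a <= b)%Z -> (forall x, (a <= x <= b)%Z -> 0 <= f x) ->
  0 <= sumZ a b f.
Proof.
  intros Hab Hf; apply Rle_trans with (sumZ a b (fun _ => 0)).
  - unfold sumZ; rewrite sum_cte; lra.
  - now apply sumZ_le.
Qed.

Lemma sumZ_le_last a b f : (a <= b - 1)%Z -> 0 <= f b -> sumZ a (b - 1) f <= sumZ a b f.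
Proof. intros Hab Hfb; rewrite (sumZ_last _ _ _ Hab); lra. Qed.

Lemma is_derive_sum_f_R0 (f : nat -> R -> R) (df : nat -> R) t N :
  (forall n, (n <= N)%nat -> is_derive (f n) t (df n)) ->
  is_derive (fun s => sum_f_R0 (fun n => f n s) N) t (sum_f_R0 df N).
Proof.
  induction N as [|N IH]; intros Hf; [apply Hf; lia|].
  apply (is_derive_ext (fun s => sum_f_R0 (fun n => f n s) N + f (S N) s)).
  { intros s; now rewrite tech5. }
  rewrite tech5; apply (is_derive_plus (fun s => sum_f_R0 (fun n => f n s) N) (f (S N))).
  - apply IH; intros; apply Hf; lia.
  - apply Hf; lia.
Qed.

Lemma is_derive_sumZ (f : Z -> R -> R) (df : Z -> R) t a b :
  (a <= b)%Z -> (forall x, (a <= x <= b)%Z -> is_derive (f x) t (df x)) ->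
  is_derive (fun s => sumZ a b (fun x => f x s)) t (sumZ a b df).
Proof.
  intros Hab Hf; apply (is_derive_sum_f_R0 (fun n => f (a + Z.of_nat n)%Z)).
  intros n Hn; apply Hf; lia.
Qed.

Lemma sumZ_by_parts_telescope (phi g : Z -> R) a b : (a < b)%Z ->
  sumZ a b (fun x => phi x * (g x - g (x - 1)%Z)) =
  phi b * g b - phi a * g (a - 1)%Z - sumZ a (b - 1) (fun x => (phi (x + 1)%Z - phi x) * g x).
Proof.
  intros Hab; pattern b; apply (Z.le_ind _) with (n := (a + 1)%Z); [|clear b Hab..|lia].
  - intros x y ->; reflexivity.
  - rewrite (sumZ_last a) by lia.
    replace (a + 1 - 1)%Z with a by lia; rewrite !sumZ_single; ring.
  - intros b Hb IH.
    rewrite (sumZ_last a (Z.succ b)) by lia.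
    replace (Z.succ b - 1)%Z with b by lia.
    rewrite IH, (sumZ_last a b (fun x => (phi (x + 1)%Z - phi x) * g x)) by lia.
    replace (b + 1)%Z with (Z.succ b) by lia; ring.
Qed.

Lemma sumZ_by_parts (phi g : Z -> R) a b : (a < b)%Z -> g (a - 1)%Z = 0 -> g b = 0 ->
  sumZ a b (fun x => phi x * (g x - g (x - 1)%Z)) =
  - sumZ a (b - 1) (fun x => (phi (x + 1)%Z - phi x) * g x).
Proof. intros Hab Ha Hb; rewrite sumZ_by_parts_telescope, Ha, Hb by lia; ring. Qed.

Lemma sum2_ext M f g : (forall i l, inrange M i -> inrange M l -> f i l = g i l) ->
  sum2 M f = sum2 M g.
Proof.
  intros Hfg; apply sumZ_ext; [lia|]; intros i Hi.
  apply sumZ_ext; [lia|]; intros l Hl; apply Hfg; unfold inrange; lia.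
Qed.

Lemma sum2_plus M f g : sum2 M (fun i l => f i l + g i l) = sum2 M f + sum2 M g.
Proof.
  unfold sum2; rewrite <- sumZ_plus; apply sum_eq; intros; apply sumZ_plus.
Qed.

Lemma sum2_scal M f c : c * sum2 M f = sum2 M (fun i l => c * f i l).
Proof. unfold sum2; rewrite sumZ_scal; apply sum_eq; intros; apply sumZ_scal. Qed.

Lemma sum2_swap M (f : Z -> Z -> Z -> Z -> R) :
  sum2 M (fun j k => sum2 M (fun i l => f j k i l)) =
  sum2 M (fun i l => sum2 M (fun j k => f j k i l)).
Proof.
  unfold sum2.
  transitivity (sumZ (- Z.of_nat M) (Z.of_nat M) (fun j => sumZ (- Z.of_nat M) (Z.of_nat M)
    (fun i => sumZ (- Z.of_nat M) (Z.of_nat M) (fun k => sumZ (- Z.of_nat M) (Z.of_nat M)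
      (fun l => f j k i l))))).
  { apply sum_eq; intros; apply sumZ_swap. }
  rewrite sumZ_swap; apply sum_eq; intros.
  symmetry; rewrite sumZ_swap; apply sum_eq; intros; apply sumZ_swap.
Qed.

Lemma is_derive_sum2 M (f : Z -> Z -> R -> R) (df : Z -> Z -> R) t :
  (forall i l, inrange M i -> inrange M l -> is_derive (f i l) t (df i l)) ->
  is_derive (fun s => sum2 M (fun i l => f i l s)) t (sum2 M df).
Proof.
  intros Hf; apply is_derive_sumZ; [lia|]; intros i Hi.
  apply is_derive_sumZ; [lia|]; intros l Hl; apply Hf; unfold inrange; lia.
Qed.

Lemma sum2_by_parts_y M (phi G : Z -> Z -> R) : (1 <= M)%nat ->
  (forall j, G j (- Z.of_nat M - 1)%Z = 0) -> (forall j, G j (Z.of_nat M) = 0) ->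
  sum2 M (fun j k => phi j k * (G j k - G j (k - 1)%Z)) =
  - sumZ (- Z.of_nat M) (Z.of_nat M) (fun j =>
      sumZ (- Z.of_nat M) (Z.of_nat M - 1) (fun k => (phi j (k + 1)%Z - phi j k) * G j k)).
Proof.
  intros HM Hlo Hhi; unfold sum2; rewrite sumZ_opp; apply sum_eq; intros.
  apply sumZ_by_parts; auto; lia.
Qed.

Lemma sum2_by_parts_x M (phi F : Z -> Z -> R) : (1 <= M)%nat ->
  (forall k, F (- Z.of_nat M - 1)%Z k = 0) -> (forall k, F (Z.of_nat M) k = 0) ->
  sum2 M (fun j k => phi j k * (F j k - F (j - 1)%Z k)) =
  - sumZ (- Z.of_nat M) (Z.of_nat M - 1) (fun j =>
      sumZ (- Z.of_nat M) (Z.of_nat M) (fun k => (phi (j + 1)%Z k - phi j k) * F j k)).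
Proof.
  intros HM Hlo Hhi; unfold sum2.
  rewrite sumZ_swap, (sumZ_swap (- Z.of_nat M) (Z.of_nat M - 1)), sumZ_opp.
  apply sum_eq; intros; apply (sumZ_by_parts (fun j => phi j _) (fun j => F j _)); auto; lia.
Qed.

Lemma sum2_conv_comm M (W : Z -> Z -> R) (a b : Z -> Z -> R) :
  (forall p q : Z, (- 2 * Z.of_nat M <= p <= 2 * Z.of_nat M)%Z ->
     (- 2 * Z.of_nat M <= q <= 2 * Z.of_nat M)%Z -> W (- p)%Z (- q)%Z = W p q) ->
  sum2 M (fun j k => sum2 M (fun i l => W (j - i)%Z (k - l)%Z * a i l) * b j k) =
  sum2 M (fun j k => sum2 M (fun i l => W (j - i)%Z (k - l)%Z * b i l) * a j k).
Proof.
  intros HW.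
  transitivity (sum2 M (fun j k => sum2 M (fun i l => W (j - i)%Z (k - l)%Z * a i l * b j k))).
  { apply sum2_ext; intros; rewrite Rmult_comm, sum2_scal; apply sum2_ext; intros; ring. }
  rewrite sum2_swap; apply sum2_ext; intros i l Hi Hl.
  rewrite Rmult_comm, sum2_scal; apply sum2_ext; intros j k Hj Hk; unfold inrange in *.
  rewrite <- (HW (j - i)%Z (k - l)%Z) by lia.
  replace (- (j - i))%Z with (i - j)%Z by lia; replace (- (k - l))%Z with (l - k)%Z by lia; ring.
Qed.

Lemma D_in_of_filterlim (f d : R -> R) (D : R -> Prop) (x : R) :
  filterlim (fun y => (f y - f x) / (y - x))
    (within (fun y => D y /\ y <> x) (locally x)) (locally (d x)) ->
  D_in f d D x.
Proof.
  intros Hlim eps Heps.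
  destruct (Hlim _ (locally_ball (d x) (mkposreal eps Heps))) as [alp Halp].
  exists alp; split; [apply cond_pos|]; intros y [[Dy Hxy] Hy].
  apply (Halp y Hy); split; auto.
Qed.

Lemma derivable_pt_lim_of_D_in (f d : R -> R) (D : R -> Prop) (x : R) :
  D_in f d D x -> locally x D -> derivable_pt_lim f x (d x).
Proof.
  intros Hf [del Hdel]; apply derivable_pt_lim_D_in; intros eps Heps.
  destruct (Hf eps Heps) as [alp [Halp Hlim]].
  exists (Rmin alp del); split; [apply Rmin_glb_lt; [lra|apply cond_pos]|].
  intros y [[_ Hxy] Hy]; apply Hlim; repeat split; auto.
  - apply Hdel; eapply Rlt_le_trans; [apply Hy|apply Rmin_r].
  - eapply Rlt_le_trans; [apply Hy|apply Rmin_l].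
Qed.

(* H need only be differentiable from the right at 0; this suffices because g stays
   nonnegative near t (Stdlib's [Dcomp] works with derivatives relative to a domain). *)
Lemma is_derive_comp_halfline (H dH g : R -> R) (t r : R) :
  filterlim (fun y => (H y - H (g t)) / (y - g t))
    (within (fun y => 0 <= y /\ y <> g t) (locally (g t))) (locally (dH (g t))) ->
  locally t (fun s => 0 <= g s) -> is_derive g t r ->
  is_derive (fun s => H (g s)) t (dH (g t) * r).
Proof.
  intros HH Hg Hgr; apply is_derive_Reals; apply is_derive_Reals in Hgr.
  rewrite Rmult_comm.
  apply (derivable_pt_lim_of_D_in _ (fun s => r * dH (g s)) (Dgf no_cond (fun y => 0 <= y) g)).
  - apply Dcomp; [apply (derivable_pt_lim_D_in g (fun _ => r)), Hgr|].
    now apply D_in_of_filterlim.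
  - destruct Hg as [del Hdel]; exists del; intros s Hs; split; [exact I|apply Hdel, Hs].
Qed.

Lemma is_derive_Rplus (f g : R -> R) t a b :
  is_derive f t a -> is_derive g t b -> is_derive (fun s => f s + g s) t (a + b).
Proof. apply (is_derive_plus f g). Qed.

Lemma is_derive_Rmult (f g : R -> R) t a b :
  is_derive f t a -> is_derive g t b -> is_derive (fun s => f s * g s) t (a * g t + f t * b).
Proof. intros Hf Hg; apply (is_derive_mult f g); auto; intros; apply Rmult_comm. Qed.

Lemma is_derive_energy (L : R) (M : nat) (H dH : R -> R) (V : R -> R -> R) (W : Z -> Z -> R)
  (rho : R -> Z -> Z -> R) (r : Z -> Z -> R) (t : R) :
  (forall x, 0 <= x ->
     filterlim (fun y => (H y - H x) / (y - x))
       (within (fun y => 0 <= y /\ y <> x) (locally x)) (locally (dH x))) ->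
  (forall p q : Z, (- 2 * Z.of_nat M <= p <= 2 * Z.of_nat M)%Z ->
     (- 2 * Z.of_nat M <= q <= 2 * Z.of_nat M)%Z -> W (- p)%Z (- q)%Z = W p q) ->
  (forall j k, inrange M j -> inrange M k -> locally t (fun s => 0 <= rho s j k)) ->
  (forall j k, inrange M j -> inrange M k -> is_derive (fun s => rho s j k) t (r j k)) ->
  is_derive (fun s => energy L M H V W (rho s)) t
    (dxM L M * dxM L M * sum2 M (fun j k => xi L M dH V W (rho t) j k * r j k)).
Proof.
  intros HH HW Hpos Hr; set (dx := dxM L M).
  assert (Hconv : forall j k, is_derive (fun s => conv L M W (rho s) j k) t (conv L M W r j k)).
  { intros j k; apply is_derive_scal, is_derive_sum2; intros i l Hi Hl.
    now apply is_derive_scal, Hr. }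
  replace (sum2 M (fun j k => xi L M dH V W (rho t) j k * r j k)) with
    (sum2 M (fun j k => / 2 * conv L M W r j k * rho t j k
                        + / 2 * conv L M W (rho t) j k * r j k
                        + dH (rho t j k) * r j k + V (IZR j * dx) (IZR k * dx) * r j k)).
  - apply is_derive_scal, is_derive_sum2; intros j k Hj Hk.
    apply is_derive_Rplus; [apply is_derive_Rplus|].
    + apply (is_derive_Rmult (fun s => / 2 * conv L M W (rho s) j k)).
      * apply is_derive_scal, Hconv.
      * now apply Hr.
    + apply (is_derive_comp_halfline H dH (fun s => rho s j k)); auto.
      apply HH; destruct (Hpos j k Hj Hk) as [e He]; apply He, ball_center.
    + now apply is_derive_scal, Hr.
  - assert (Hsym : sum2 M (fun j k => conv L M W r j k * rho t j k) =
                   sum2 M (fun j k => conv L M W (rho t) j k * r j k)).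
    { unfold conv; fold dx.
      transitivity (dx * dx * sum2 M (fun j k =>
        sum2 M (fun i l => W (j - i)%Z (k - l)%Z * r i l) * rho t j k)).
      { rewrite sum2_scal; apply sum2_ext; intros; ring. }
      rewrite sum2_conv_comm, sum2_scal by exact HW; apply sum2_ext; intros; ring. }
    transitivity (/ 2 * sum2 M (fun j k => conv L M W r j k * rho t j k)
                  + / 2 * sum2 M (fun j k => conv L M W (rho t) j k * r j k)
                  + sum2 M (fun j k => (dH (rho t j k) + V (IZR j * dx) (IZR k * dx)) * r j k)).
    + rewrite !sum2_scal, <- !sum2_plus; apply sum2_ext; intros; ring.
    + rewrite Hsym, !sum2_scal, <- !sum2_plus; apply sum2_ext; intros; unfold xi; fold dx; field.
Qed.

Lemma interface_flag_true a j b : andb (a <=? j)%Z (j <? b)%Z = true <-> (a <= j < b)%Z.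
Proof. rewrite Bool.andb_true_iff, Z.leb_le, Z.ltb_lt; tauto. Qed.

Lemma upwind_flux_work u a b : 0 <= a -> 0 <= b ->
  u ^ 2 * Rmin a b <= u * (posp u * a + negp u * b).
Proof.
  intros Ha Hb; unfold posp, negp.
  destruct (Rle_dec 0 u).
  - rewrite (Rmax_left u 0), (Rmin_right u 0) by lra.
    assert (Rmin a b <= a) by apply Rmin_l; nra.
  - rewrite (Rmax_right u 0), (Rmin_left u 0) by lra.
    assert (Rmin a b <= b) by apply Rmin_r; nra.
Qed.

Section FixedTime.
Variables (L : R) (M : nat) (dH : R -> R) (V : R -> R -> R) (W : Z -> Z -> R).
Variables (rho rx ry : Z -> Z -> R).
Hypotheses (HL : 0 < L) (HM : (1 <= M)%nat).

Local Notation m := (Z.of_nat M).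
Local Notation dx := (dxM L M).
Local Notation u := (uvel L M dH V W rho).
Local Notation v := (vvel L M dH V W rho).
Local Notation Fx' := (Fx L M dH V W rho rx).
Local Notation Fy' := (Fy L M dH V W rho ry).

(* Unlike I_Delta, this ranges over every interior interface, including those in the
   row k = M and the column j = M. *)
Definition flux_work : R :=
  sumZ (- m) (m - 1) (fun j => sumZ (- m) m (fun k => u j k * Fx' j k)) +
  sumZ (- m) m (fun j => sumZ (- m) (m - 1) (fun k => v j k * Fy' j k)).

Lemma dxM_pos : 0 < dx.
Proof. apply Rdiv_lt_0_compat; [exact HL|apply lt_0_INR; lia]. Qed.

Lemma sum2_xi_rhs :
  sum2 M (fun j k => xi L M dH V W rho j k * rhs L M dH V W rho rx ry j k) = - flux_work.
Proof.
  pose proof dxM_pos as Hdx.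
  set (phi := xi L M dH V W rho).
  transitivity (- / dx * sum2 M (fun j k => phi j k * (Fx' j k - Fx' (j - 1)%Z k))
                + - / dx * sum2 M (fun j k => phi j k * (Fy' j k - Fy' j (k - 1)%Z))).
  { rewrite !sum2_scal, <- sum2_plus.
    apply sum2_ext; intros; unfold rhs; field; lra. }
  rewrite sum2_by_parts_x, sum2_by_parts_y; auto.
  - unfold flux_work.
    transitivity (- (sumZ (- m) (m - 1) (fun j => - / dx * sumZ (- m) m (fun k =>
                      (phi (j + 1)%Z k - phi j k) * Fx' j k)) +
                     sumZ (- m) m (fun j => - / dx * sumZ (- m) (m - 1) (fun k =>
                      (phi j (k + 1)%Z - phi j k) * Fy' j k)))).
    { rewrite <- !sumZ_scal; ring. }
    do 2 f_equal; apply sum_eq; intros; rewrite sumZ_scal; apply sum_eq; intros;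
      unfold uvel, vvel; fold phi; field; lra.
  all: intros; unfold Fx, Fy; destruct (andb _ _) eqn:E; [|reflexivity].
  all: apply interface_flag_true in E; lia.
Qed.

Hypothesis Hfaces : forall j k, inrange M j -> inrange M k ->
  0 <= rhoE L M rho rx j k /\ 0 <= rhoW L M rho rx j k /\
  0 <= rhoN L M rho ry j k /\ 0 <= rhoS L M rho ry j k.

Lemma uvel_Fx_lower j k : (- m <= j <= m - 1)%Z -> inrange M k ->
  u j k ^ 2 * Rmin (rhoE L M rho rx j k) (rhoW L M rho rx (j + 1) k) <= u j k * Fx' j k.
Proof.
  intros Hj Hk; unfold Fx.
  replace (andb _ _) with true by (symmetry; apply interface_flag_true; lia).
  apply upwind_flux_work; [apply (Hfaces j k)|apply (Hfaces (j + 1) k)];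
    unfold inrange in *; auto; lia.
Qed.

Lemma vvel_Fy_lower j k : inrange M j -> (- m <= k <= m - 1)%Z ->
  v j k ^ 2 * Rmin (rhoN L M rho ry j k) (rhoS L M rho ry j (k + 1)) <= v j k * Fy' j k.
Proof.
  intros Hj Hk; unfold Fy.
  replace (andb _ _) with true by (symmetry; apply interface_flag_true; lia).
  apply upwind_flux_work; [apply (Hfaces j k)|apply (Hfaces j (k + 1))];
    unfold inrange in *; auto; lia.
Qed.

Lemma uvel_Fx_nonneg j k : (- m <= j <= m - 1)%Z -> inrange M k -> 0 <= u j k * Fx' j k.
Proof.
  intros Hj Hk; eapply Rle_trans; [|now apply uvel_Fx_lower].
  apply Rmult_le_pos; [apply pow2_ge_0|apply Rmin_glb];
    [apply (Hfaces j k)|apply (Hfaces (j + 1) k)]; unfold inrange in *; auto; lia.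
Qed.

Lemma vvel_Fy_nonneg j k : inrange M j -> (- m <= k <= m - 1)%Z -> 0 <= v j k * Fy' j k.
Proof.
  intros Hj Hk; eapply Rle_trans; [|now apply vvel_Fy_lower].
  apply Rmult_le_pos; [apply pow2_ge_0|apply Rmin_glb];
    [apply (Hfaces j k)|apply (Hfaces j (k + 1))]; unfold inrange in *; auto; lia.
Qed.

Lemma dissip_le_flux_work : dissip L M dH V W rho rx ry <= dx * dx * flux_work.
Proof.
  pose proof dxM_pos as Hdx.
  apply Rmult_le_compat_l; [nra|].
  apply Rle_trans with (sumZ (- m) (m - 1) (fun j => sumZ (- m) (m - 1) (fun k =>
                          u j k * Fx' j k + v j k * Fy' j k))).
  - apply sumZ_le; [lia|]; intros j Hj; apply sumZ_le; [lia|]; intros k Hk.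
    rewrite Rmult_plus_distr_r; apply Rplus_le_compat.
    + eapply Rle_trans; [|apply uvel_Fx_lower; unfold inrange; lia].
      apply Rmult_le_compat_l; [apply pow2_ge_0|apply Rmin_l].
    + eapply Rle_trans; [|apply vvel_Fy_lower; unfold inrange; lia].
      apply Rmult_le_compat_l; [apply pow2_ge_0|apply Rmin_r].
  - unfold flux_work.
    rewrite (sumZ_ext _ _ _ (fun j => sumZ (- m) (m - 1) (fun k => u j k * Fx' j k)
                                   + sumZ (- m) (m - 1) (fun k => v j k * Fy' j k)))
      by (lia || (intros; apply sumZ_plus)).
    rewrite sumZ_plus; apply Rplus_le_compat.
    + apply sumZ_le; [lia|]; intros j Hj; apply sumZ_le_last; [lia|].
      apply uvel_Fx_nonneg; unfold inrange; lia.
    + apply sumZ_le_last; [lia|]; apply sumZ_nonneg; [lia|]; intros k Hk.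
      apply vvel_Fy_nonneg; unfold inrange; lia.
Qed.

End FixedTime.

Theorem theorem2p4 (L : R) (M : nat) (H dH : R -> R) (V : R -> R -> R)
  (W : Z -> Z -> R) (rho rx ry : R -> Z -> Z -> R) :
  0 < L -> (1 <= M)%nat ->
  C1_halfline H dH ->
  (forall p q : Z, (- 2 * Z.of_nat M <= p <= 2 * Z.of_nat M)%Z ->
     (- 2 * Z.of_nat M <= q <= 2 * Z.of_nat M)%Z -> W (- p)%Z (- q)%Z = W p q) ->
  (forall t j k, 0 < t -> inrange M j -> inrange M k -> 0 <= rho t j k) ->
  (forall t j k, 0 < t -> inrange M j -> inrange M k ->
     0 <= rhoE L M (rho t) (rx t) j k /\ 0 <= rhoW L M (rho t) (rx t) j k /\
     0 <= rhoN L M (rho t) (ry t) j k /\ 0 <= rhoS L M (rho t) (ry t) j k) ->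
  (forall t j k, 0 < t -> inrange M j -> inrange M k ->
     is_derive (fun s => rho s j k) t (rhs L M dH V W (rho t) (rx t) (ry t) j k)) ->
  forall t, 0 < t ->
    exists d, is_derive (fun s => energy L M H V W (rho s)) t d /\
              d <= - dissip L M dH V W (rho t) (rx t) (ry t).
Proof.
  intros HL HM [HH _] HW Hrho Hfaces Hder t Ht.
  eexists; split.
  - apply is_derive_energy; auto.
    intros j k Hj Hk; exists (mkposreal t Ht); intros s Hs.
    apply Hrho; auto; assert (Hst : Rabs (s - t) < t) by exact Hs; apply Rabs_def2 in Hst; lra.
  - rewrite sum2_xi_rhs by assumption.
    pose proof (dissip_le_flux_work L M dH V W (rho t) (rx t) (ry t) HL HM
                  (fun j k => Hfaces t j k Ht)).
    lra.
Qed.
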